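(* The Burnside ring of finite racks $\mathrm{B}(\mathcal{R})$ admits the structure of a commutative ring with unit, with respect to a product satisfying $b(R')\,b(R)=b(R'\times R)$ for all finite racks $R,R'$, and with multiplicative identity $b(\star)$, the class of the one-element rack $\star$.
   Context: A rack is a set $R$ with a binary operation $\rhd$ such that every left multiplication $\ell_a\colon b\mapsto a\rhd b$ is a bijection and $a\rhd(b\rhd c)=(a\rhd b)\rhd(a\rhd c)$ for all $a,b,c$. The product $R'\times R$ of racks is the cartesian product with componentwise operation. A subrack is a subset $S$ with $\ell_s(S)=S$ for all $s\in S$; a decomposition of $R$ into $S$ and $T$ means $S,T$ are disjoint subracks (possibly empty) with $S\cup T=R$. $\mathrm{B}(\mathcal{R})$ is the abelian group generated by symbols $b(R)$, one for each finite rack $R$, subject to $b(R_1)=b(R_2)$ whenever $R_1\cong R_2$, and $b(R)=b(S)+b(T)$ whenever $R$ decomposes into $S$ and $T$. *)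

From HB Require Import structures.
From mathcomp Require Import all_boot all_order all_algebra.
Set Implicit Arguments. Unset Strict Implicit. Unset Printing Implicit Defensive.
Import GRing.Theory.
Local Open Scope ring_scope.

Record rackData := RackData { rcar : finType; rop : rcar -> rcar -> rcar }.

Definition is_rack (R : rackData) : Prop :=
  (forall a : rcar R, bijective (rop a)) /\
  (forall a b c : rcar R, rop a (rop b c) = rop (rop a b) (rop a c)).

Definition rack_iso (R1 R2 : rackData) : Prop :=
  exists f : rcar R1 -> rcar R2,
    bijective f /\ forall x y, f (rop x y) = rop (f x) (f y).

Definition is_subrack (R : rackData) (S : {set rcar R}) : Prop :=
  forall s, s \in S -> [set rop s x | x in S] = S.

(* The subset S with the restricted operation (for a subrack, insubd never
   takes the default branch, so this is exactly the restriction). *)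
Definition subRack (R : rackData) (S : {set rcar R}) : rackData :=
  @RackData {x : rcar R | x \in S}
    (fun x y => insubd x (rop (val x) (val y))).

Definition prodRack (R' R : rackData) : rackData :=
  @RackData (rcar R' * rcar R)%type
    (fun x y => (rop x.1 y.1, rop x.2 y.2)).

Definition starRack : rackData := @RackData unit (fun _ _ => tt).

Definition burnside_relations (C : zmodType) (c : rackData -> C) : Prop :=
  (forall R1 R2, is_rack R1 -> is_rack R2 -> rack_iso R1 R2 -> c R1 = c R2) /\
  (forall (R : rackData) (S T : {set rcar R}),
      is_rack R -> is_subrack S -> is_subrack T ->
      [disjoint S & T] -> S :|: T = setT ->
      c R = c (subRack S) + c (subRack T)).

(* (B, b) is the abelian group generated by the symbols b(R), R a finite rack,
   subject to the relations above: it satisfies the relations, is generated by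
   the b(R), and every relation-respecting map factors through an additive map. *)
Definition is_burnside_group (B : zmodType) (b : rackData -> B) : Prop :=
  burnside_relations b /\
  (forall x : B, exists s : seq (rackData * int),
      foldr (fun (p : rackData * int) (P : Prop) => is_rack p.1 /\ P) True s /\ x = \sum_(p <- s) (b p.1 *~ p.2)) /\
  (forall (C : zmodType) (c : rackData -> C), burnside_relations c ->
      exists f : B -> C, (forall x y, f (x + y) = f x + f y) /\
        forall R, is_rack R -> f (b R) = c R).

(** The symbols [b R] span B, so an additive map out of B is determined by its
    values on them, and the universal property produces additive maps from
    assignments [R |-> c R] compatible with isomorphism and decomposition.
    Applying it twice, first to [R |-> b (R' x R)] for each rack [R'] and then
    in the variable [R'], extends [(R', R) |-> b (R' x R)] to a biadditive
    product on B.  Since rack decompositions of a factor are decompositions of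
    the product, both assignments are compatible.  Associativity, commutativity
    and the unit law are identities between multiadditive maps, so they only
    need to hold on generators, where they are the isomorphisms
    [R1 x (R2 x R3) ~ (R1 x R2) x R3], [R' x R ~ R x R'] and [* x R ~ R]. *)
From HB Require Import structures.
From mathcomp Require Import all_boot all_order all_algebra.
From Stdlib Require Import Classical IndefiniteDescription.
Set Implicit Arguments. Unset Strict Implicit. Unset Printing Implicit Defensive.
Import GRing.Theory.
Local Open Scope ring_scope.

Section MorphAdd.

Variables (B C : zmodType) (f : B -> C).
Hypothesis fD : {morph f : x y / x + y}.

Lemma morph_add0 : f 0 = 0.
Proof. by apply: (addrI (f 0)); rewrite -fD !addr0. Qed.

Lemma morph_addMz x n : f (x *~ n) = f x *~ n.
Proof.
exact: (raddfMz (HB.pack f (GRing.isNmodMorphism.Build B C f (conj morph_add0 fD)))).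
Qed.

End MorphAdd.

Lemma rop_inj (R : rackData) (a : rcar R) : is_rack R -> injective (rop a).
Proof. by move=> [ropK _]; apply: bij_inj. Qed.

Lemma subrack_rop (R : rackData) (S : {set rcar R}) s x :
  is_subrack S -> s \in S -> x \in S -> rop s x \in S.
Proof. by move=> subS sS xS; rewrite -(subS s sS); apply: imset_f. Qed.

Lemma rop_closed_subrack (R : rackData) (S : {set rcar R}) : is_rack R ->
  (forall s x, s \in S -> x \in S -> rop s x \in S) -> is_subrack S.
Proof.
move=> Rrack ropS s sS; apply/eqP; rewrite eqEcard card_imset; last exact: rop_inj.
by rewrite leqnn andbT; apply/subsetP => _ /imsetP[x xS ->]; apply: ropS.
Qed.

Lemma subRack_ropE (R : rackData) (S : {set rcar R}) (x y : rcar (subRack S)) :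
  is_subrack S -> val (rop x y) = rop (val x) (val y).
Proof. by move=> subS; rewrite insubdK //; apply: subrack_rop => //; apply: valP. Qed.

Lemma subRack_rack (R : rackData) (S : {set rcar R}) :
  is_rack R -> is_subrack S -> is_rack (subRack S).
Proof.
move=> Rrack subS; split=> [a|a x y]; last first.
  by apply: val_inj; rewrite !subRack_ropE //; apply: Rrack.2.
apply: injF_bij => x y /(congr1 val); rewrite !subRack_ropE //.
by move/(rop_inj Rrack)/val_inj.
Qed.

Lemma prodRack_rack (R' R : rackData) :
  is_rack R' -> is_rack R -> is_rack (prodRack R' R).
Proof.
move=> R'rack Rrack; split=> [a|a x y]; last first.
  by congr pair; [apply: R'rack.2 | apply: Rrack.2].
by apply: injF_bij => -[x' x] [y' y] [] /(rop_inj R'rack) -> /(rop_inj Rrack) ->.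
Qed.

Lemma starRack_rack : is_rack starRack.
Proof. by split=> // a; exists id => -[]. Qed.

Lemma rack_iso_refl (R : rackData) : rack_iso R R.
Proof. by exists id; split=> //; exists id. Qed.

Lemma rack_iso_prod (R1' R2' R1 R2 : rackData) :
  rack_iso R1' R2' -> rack_iso R1 R2 -> rack_iso (prodRack R1' R1) (prodRack R2' R2).
Proof.
move=> [f' [[g' f'K g'K] f'M]] [f [[g fK gK] fM]].
exists (fun x : rcar (prodRack R1' R1) => (f' x.1, f x.2) : rcar (prodRack R2' R2)).
split=> [|x y]; last by rewrite /= f'M fM.
exists (fun x : rcar (prodRack R2' R2) => (g' x.1, g x.2) : rcar (prodRack R1' R1)).
  by move=> -[x' x] /=; rewrite f'K fK.
by move=> -[x' x] /=; rewrite g'K gK.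
Qed.

Lemma prodRackC_iso (R' R : rackData) : rack_iso (prodRack R' R) (prodRack R R').
Proof.
exists (fun x : rcar (prodRack R' R) => (x.2, x.1) : rcar (prodRack R R')).
by split=> //; exists (fun x : rcar (prodRack R R') => (x.2, x.1) : rcar (prodRack R' R)) => -[].
Qed.

Lemma prodRackA_iso (R1 R2 R3 : rackData) :
  rack_iso (prodRack R1 (prodRack R2 R3)) (prodRack (prodRack R1 R2) R3).
Proof.
exists (fun x : rcar (prodRack R1 (prodRack R2 R3)) =>
          ((x.1, x.2.1), x.2.2) : rcar (prodRack (prodRack R1 R2) R3)).
split=> //; exists (fun x : rcar (prodRack (prodRack R1 R2) R3) =>
                      (x.1.1, (x.1.2, x.2)) : rcar (prodRack R1 (prodRack R2 R3))).
  by move=> -[? []].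
by move=> -[[]].
Qed.

Lemma prod1Rack_iso (R : rackData) : rack_iso (prodRack starRack R) R.
Proof.
exists (fun x : rcar (prodRack starRack R) => x.2); split=> //.
by exists (fun x : rcar R => (tt, x) : rcar (prodRack starRack R)) => // -[[]].
Qed.

Definition prodRack_set (R' R : rackData) (S : {set rcar R}) :
  {set rcar (prodRack R' R)} := [set x | x.2 \in S].

Lemma prodRack_subrack (R' R : rackData) (S : {set rcar R}) :
  is_rack R' -> is_rack R -> is_subrack S -> is_subrack (prodRack_set R' S).
Proof.
move=> R'rack Rrack subS; apply: rop_closed_subrack; first exact: prodRack_rack.
by move=> s x; rewrite !inE; apply: subrack_rop.
Qed.

Lemma prodRack_subRack_iso (R' R : rackData) (S : {set rcar R}) :
  is_rack R' -> is_rack R -> is_subrack S ->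
  rack_iso (subRack (prodRack_set R' S)) (prodRack R' (subRack S)).
Proof.
move=> R'rack Rrack subS; have subR'S := prodRack_subrack R'rack Rrack subS.
have fP (x : rcar (subRack (prodRack_set R' S))) : (val x).2 \in S.
  by have := valP x; rewrite inE.
have gP (x : rcar (prodRack R' (subRack S))) : (x.1, val x.2) \in prodRack_set R' S.
  by rewrite inE; apply: valP.
exists (fun x => ((val x).1, exist _ (val x).2 (fP x)) : rcar (prodRack R' (subRack S))).
split=> [|x y].
  exists (fun x => exist _ (x.1, val x.2) (gP x) : rcar (subRack (prodRack_set R' S))).
    by move=> x; apply: val_inj; rewrite /= -surjective_pairing.
  by move=> -[x' [x xS]]; congr pair; apply: val_inj.
have ropE := subRack_ropE x y subR'S.
congr pair; first by rewrite ropE.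
by apply: val_inj; rewrite subRack_ropE //= ropE.
Qed.

Section BurnsideGroup.

Variables (B : zmodType) (b : rackData -> B).
Hypothesis bB : is_burnside_group b.

Lemma burnside_iso (R1 R2 : rackData) :
  is_rack R1 -> is_rack R2 -> rack_iso R1 R2 -> b R1 = b R2.
Proof. exact: bB.1.1. Qed.

Lemma burnside_eq_on_racks (C : zmodType) (f g : B -> C) :
  {morph f : x y / x + y} -> {morph g : x y / x + y} ->
  (forall R, is_rack R -> f (b R) = g (b R)) -> f =1 g.
Proof.
move=> fD gD fgb x; have [s [srack ->]] := bB.2.1 x.
elim: s srack => [_|[R n] s IHs [Rrack srack]] /=.
  by rewrite !big_nil !morph_add0.
by rewrite !big_cons fD gD IHs // !morph_addMz // fgb.
Qed.

Lemma burnside_eq2_on_racks (C : zmodType) (m1 m2 : B -> B -> C) :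
  (forall y, {morph m1^~ y : x x' / x + x'}) -> (forall x, {morph m1 x : y y' / y + y'}) ->
  (forall y, {morph m2^~ y : x x' / x + x'}) -> (forall x, {morph m2 x : y y' / y + y'}) ->
  (forall R' R, is_rack R' -> is_rack R -> m1 (b R') (b R) = m2 (b R') (b R)) ->
  forall x y, m1 x y = m2 x y.
Proof.
move=> m1Dl m1Dr m2Dl m2Dr m12b x y; move: x.
apply: burnside_eq_on_racks => // R' R'rack; move: y.
by apply: burnside_eq_on_racks => // R Rrack; apply: m12b.
Qed.

Lemma burnside_lift_family (C : zmodType) (I : Type) (P : I -> Prop)
    (c : I -> rackData -> C) :
  (forall i, P i -> burnside_relations (c i)) ->
  exists l : I -> B -> C, forall i, P i ->
    {morph l i : x y / x + y} /\ forall R, is_rack R -> l i (b R) = c i R.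
Proof.
move=> crel; apply: (functional_choice (fun i (f : B -> C) => P i ->
  {morph f : x y / x + y} /\ forall R, is_rack R -> f (b R) = c i R)) => i.
have [Pi|notPi] := classic (P i); last by exists (fun=> 0).
by have [f [fD fb]] := bB.2.2 C (c i) (crel i Pi); exists f.
Qed.

Lemma burnside_biadditive_lift (C : zmodType) (c : rackData -> rackData -> C) :
  (forall R', is_rack R' -> burnside_relations (c R')) ->
  (forall R, is_rack R -> burnside_relations (c^~ R)) ->
  exists mul : B -> B -> C,
    [/\ forall y, {morph mul^~ y : x x' / x + x'},
        forall x, {morph mul x : y y' / y + y'} &
        forall R' R, is_rack R' -> is_rack R -> mul (b R') (b R) = c R' R].
Proof.
move=> crel_r crel_l.
have [l lP] := burnside_lift_family crel_r.
have lrel y : burnside_relations (fun R' => l R' y).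
  split=> [R1 R2 R1rack R2rack iso12 | R' S T R'rack subS subT disjST covST].
    have [[l1D l1b] [l2D l2b]] := (lP R1 R1rack, lP R2 R2rack).
    apply: burnside_eq_on_racks => // R Rrack; rewrite l1b // l2b //.
    by apply: (crel_l R Rrack).1.
  have [Srack Track] := (subRack_rack R'rack subS, subRack_rack R'rack subT).
  have [[lD lb] [lSD lSb]] := (lP R' R'rack, lP _ Srack); have [lTD lTb] := lP _ Track.
  move: y; apply: burnside_eq_on_racks => // [u v|R Rrack].
    by rewrite lSD lTD addrACA.
  by rewrite lb // lSb // lTb //; apply: (crel_l R Rrack).2.
have [m mP] := burnside_lift_family (P := fun=> True) (fun y _ => lrel y).
exists (fun x y => m y x); split=> [y|x u v|R' R R'rack Rrack].
- by have [] := mP y I.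
- move: x; apply: burnside_eq_on_racks => [x x'|x x'|R' R'rack].
  + by have [->] := mP (u + v) I.
  + by rewrite (mP u I).1 (mP v I).1 addrACA.
  by rewrite !(mP _ I).2 //; apply: (lP R' R'rack).1.
- by rewrite (mP _ I).2 // (lP R' R'rack).2.
Qed.

Lemma burnside_prodRackC (R' R : rackData) :
  is_rack R' -> is_rack R -> b (prodRack R' R) = b (prodRack R R').
Proof. by move=> R'rack Rrack; apply: burnside_iso (prodRackC_iso _ _); apply: prodRack_rack. Qed.

Lemma burnside_prodRack_relations_r (R' : rackData) :
  is_rack R' -> burnside_relations (fun R => b (prodRack R' R)).
Proof.
move=> R'rack; split=> [R1 R2 R1rack R2rack iso12 | R S T Rrack subS subT disjST covST].
  by apply: burnside_iso (rack_iso_prod (rack_iso_refl R') iso12); apply: prodRack_rack.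
have [R'Srack R'Track] := (prodRack_subrack R'rack Rrack subS, prodRack_subrack R'rack Rrack subT).
have R'Rrack := prodRack_rack R'rack Rrack.
rewrite (bB.1.2 _ (prodRack_set R' S) (prodRack_set R' T)) //.
- have [Srack Track] := (subRack_rack Rrack subS, subRack_rack Rrack subT).
  congr (_ + _); apply: burnside_iso (prodRack_subRack_iso R'rack Rrack _) => //.
  1,3: exact: subRack_rack.
  1,2: exact: prodRack_rack.
- apply/pred0P => x /=; rewrite !inE; apply/negbTE/andP => -[xS xT].
  by rewrite (disjointFr disjST xS) in xT.
- by apply/setP => x; rewrite !inE -in_setU covST in_setT.
Qed.

Lemma burnside_prodRack_relations_l (R : rackData) :
  is_rack R -> burnside_relations (fun R' => b (prodRack R' R)).
Proof.
move=> Rrack; split=> [R1 R2 R1rack R2rack iso12 | R' S T R'rack subS subT disjST covST].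
  by apply: burnside_iso (rack_iso_prod iso12 (rack_iso_refl R)); apply: prodRack_rack.
have [Srack Track] := (subRack_rack R'rack subS, subRack_rack R'rack subT).
rewrite !(burnside_prodRackC _ Rrack) //.
exact: (burnside_prodRack_relations_r Rrack).2.
Qed.

End BurnsideGroup.

Section BurnsideProduct.

Variables (B : zmodType) (b : rackData -> B) (mul : B -> B -> B).
Hypothesis bB : is_burnside_group b.
Hypothesis mulDl : forall y, {morph mul^~ y : x x' / x + x'}.
Hypothesis mulDr : forall x, {morph mul x : y y' / y + y'}.
Hypothesis mul_b : forall R' R, is_rack R' -> is_rack R -> mul (b R') (b R) = b (prodRack R' R).

Lemma burnside_mulA : associative mul.
Proof.
move=> x y z.
apply: (burnside_eq2_on_racks bB (m1 := fun x y => mul x (mul y z))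
                                  (m2 := fun x y => mul (mul x y) z))
  => [? ? ?|? ? ?|? ? ?|? ? ?|R1 R2 R1rack R2rack] /=; rewrite ?mulDl ?mulDr ?mulDl //.
move: z; apply: (burnside_eq_on_racks bB) => [z z'|z z'|R3 R3rack]; rewrite ?mulDr //.
have [R12rack R23rack] := (prodRack_rack R1rack R2rack, prodRack_rack R2rack R3rack).
rewrite !mul_b //.
by apply: (burnside_iso bB _ _ (prodRackA_iso _ _ _)); apply: prodRack_rack.
Qed.

Lemma burnside_mulC : commutative mul.
Proof.
apply: (burnside_eq2_on_racks bB (m1 := mul) (m2 := fun x y => mul y x)) => //=.
by move=> R' R R'rack Rrack; rewrite !mul_b // (burnside_prodRackC bB).
Qed.

Lemma burnside_mul1 : left_id (b starRack) mul.
Proof.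
have mul_star_b R : is_rack R -> mul (b starRack) (b R) = b R.
  move=> Rrack; rewrite mul_b //; last exact: starRack_rack.
  by apply: (burnside_iso bB _ Rrack (prod1Rack_iso R)); apply: prodRack_rack starRack_rack Rrack.
exact: (burnside_eq_on_racks bB (mulDr _) (g := id) (fun _ _ => erefl) mul_star_b).
Qed.

End BurnsideProduct.

Theorem proposition3p15 (B : zmodType) (b : rackData -> B) :
  is_burnside_group b ->
  exists mul : B -> B -> B,
    (forall x y z, mul x (mul y z) = mul (mul x y) z) /\
    (forall x y, mul x y = mul y x) /\
    (forall x y z, mul (x + y) z = mul x z + mul y z) /\
    (forall x, mul (b starRack) x = x) /\
    (forall R' R, is_rack R' -> is_rack R -> mul (b R') (b R) = b (prodRack R' R)).
Proof.
move=> bB.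
have [mul [mulDl mulDr mul_b]] := burnside_biadditive_lift bB
  (burnside_prodRack_relations_r bB) (burnside_prodRack_relations_l bB).
exists mul; split; [|split; [|split; [|split]]] => //.
- exact: burnside_mulA mulDl mulDr mul_b.
- exact: burnside_mulC mulDl mulDr mul_b.
- by move=> x y z; apply: mulDl.
- exact: burnside_mul1 mulDr mul_b.
Qed.
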